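(* Fix $l\in S^{d-1}$, $L'>R$ and $L=3L'$. Let $w:\mathbb R_+\to\mathbb R^d$ be a continuous path with $w(0)=0$ and $\limsup_{t\to\infty}\frac{l\cdot w(t)}{t}>0$. Then there exists an integer $h\ge1$ such that for all integers $\alpha\ge2$, $$\limsup_{M\to\infty}\frac1{M+1}\sum_{m=0}^M\mathbb 1_{\{h^{(m)}_\alpha(w)\le h\}}\ge\frac13 .$$
   Context: All quantities below are evaluated along the path $w$ (infimum of the empty set is $+\infty$). For $a<b$: open slab $\mathcal S_{(a,b)}=\{x:a<x\cdot l<b\}$, closed slab $\bar{\mathcal S}_{(a,b)}=\{x:a\le x\cdot l\le b\}$. For a set $A$: entrance time $H_A=\inf\{t\ge0:w(t)\in A\}$, exit time $T_A=\inf\{t\ge0:w(t)\notin A\}$; $T_u=\inf\{t\ge0:l\cdot w(t)\ge u\}$; $\theta_t$ denotes the time shift $(\theta_tw)(s)=w(t+s)$. For integer $m\ge0$: $R^{(m)}_1=H_{\bar{\mathcal S}_{(mL+L',mL+2L')}}$, $S^{(m)}_1=T_{\mathcal S_{(mL,(m+1)L)}}\circ\theta_{R^{(m)}_1}+R^{(m)}_1$, and for $k\ge2$, $R^{(m)}_k=R^{(m)}_1\circ\theta_{S^{(m)}_{k-1}}+S^{(m)}_{k-1}$, $S^{(m)}_k=S^{(m)}_1\circ\theta_{S^{(m)}_{k-1}}+S^{(m)}_{k-1}$. For integer $\alpha\ge2$: $k^{(m)}_\alpha=\max\{k\ge1:R^{(m)}_k+1\le S^{(m)}_k<T_{(m+\alpha)L}\}$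 if $T_{(m+\alpha)L}<\infty$ and this set is nonempty, and $k^{(m)}_\alpha=0$ otherwise; $h^{(m)}_\alpha=S^{(m)}_{k^{(m)}_\alpha}-T_{mL}$ if $T_{(m+\alpha)L}<\infty$ (with the convention $S^{(m)}_0=T_{mL}$), and $h^{(m)}_\alpha=\infty$ otherwise. Here $R>0$ is a fixed positive constant. *)

From HB Require Import structures.
From mathcomp Require Import all_boot all_order all_algebra.
From mathcomp Require Import all_classical all_reals all_analysis.
Set Implicit Arguments. Unset Strict Implicit. Unset Printing Implicit Defensive.
Import Order.TTheory GRing.Theory Num.Theory.
Import numFieldNormedType.Exports.
Local Open Scope classical_set_scope.
Local Open Scope ring_scope.

Section Defs.
Variables (R : realType) (d : nat).
Local Notation vec := 'rV[R]_d.
Local Notation path := (R -> vec).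

Definition dotv (x y : vec) : R := \sum_(i < d) x 0 i * y 0 i.

Definition oslab (l : vec) (a b : R) : set vec := [set x | a < dotv x l < b].
Definition cslab (l : vec) (a b : R) : set vec := [set x | a <= dotv x l <= b].

(* entrance time H_A = inf {t >= 0 : w t \in A} (inf of empty set = +oo) *)
Definition hitT (A : set vec) (w : path) : \bar R :=
  ereal_inf [set t%:E | t in [set t : R | 0 <= t /\ A (w t)]].
Definition exitT (A : set vec) (w : path) : \bar R := hitT (~` A) w.
Definition Tu (l : vec) (u : R) (w : path) : \bar R :=
  ereal_inf [set t%:E | t in [set t : R | 0 <= t /\ u <= dotv l (w t)]].

Definition shift (w : path) (t : R) : path := fun s => w (t + s).

Definition after (T : \bar R) (F : path -> \bar R) (w : path) : \bar R :=
  match T with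
  | EFin r => (F (shift w r) + r%:E)%E
  | _ => +oo%E
  end.

Variables (l : vec) (L L' : R).

Definition R1 (m : nat) (w : path) : \bar R :=
  hitT (cslab l (m%:R * L + L') (m%:R * L + 2 * L')) w.
Definition S1 (m : nat) (w : path) : \bar R :=
  after (R1 m w) (exitT (oslab l (m%:R * L) (m.+1%:R * L))) w.

(* RS m n w = (R^(m)_(n+1), S^(m)_(n+1)) *)
Fixpoint RS (m n : nat) (w : path) : \bar R * \bar R :=
  match n with
  | 0 => (R1 m w, S1 m w)
  | n'.+1 => let s := (RS m n' w).2 in (after s (R1 m) w, after s (S1 m) w)
  end.

(* R^(m)_k and S^(m)_k for k >= 1; S^(m)_0 := T_(mL) *)
Definition Rk (m k : nat) (w : path) : \bar R := (RS m k.-1 w).1.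
Definition Sk (m k : nat) (w : path) : \bar R :=
  if k is 0 then Tu l (m%:R * L) w else (RS m k.-1 w).2.

Definition kset (m alpha : nat) (w : path) : set nat :=
  [set k | (1 <= k)%N /\ (Rk m k w + 1%:E <= Sk m k w)%E /\
           (Sk m k w < Tu l ((m + alpha)%:R * L) w)%E].

Definition kspec (m alpha : nat) (w : path) (k : nat) : Prop :=
  if ((Tu l ((m + alpha)%:R * L) w) < +oo)%E && `[< kset m alpha w !=set0 >]
  then kset m alpha w k /\ (forall j, kset m alpha w j -> (j <= k)%N)
  else k = 0%N.

(* k^(m)_alpha: the (unique) k satisfying kspec (the maximum exists) *)
Definition kalpha (m alpha : nat) (w : path) : nat := xget 0%N (kspec m alpha w).

Definition halpha (m alpha : nat) (w : path) : \bar R :=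
  if ((Tu l ((m + alpha)%:R * L) w) < +oo)%E
  then (Sk m (kalpha m alpha w) w - Tu l (m%:R * L) w)%E
  else +oo%E.

End Defs.

From Pilot Require Import Defs.
From HB Require Import structures.
From mathcomp Require Import all_boot all_order all_algebra.
From mathcomp Require Import all_classical all_reals all_analysis.
From mathcomp Require Import zify ring lra.
Set Implicit Arguments.
Unset Strict Implicit.
Unset Printing Implicit Defensive.

Import Order.TTheory GRing.Theory Num.Theory.
Import numFieldNormedType.Exports.
Local Open Scope classical_set_scope.
Local Open Scope ring_scope.

(* Let tau k = T_(kL).  Positive drift gives c > 0 with tau N < (N+1) L / c for
   infinitely many N.  If h^(m)_alpha > h, the last excursion counted by k^(m)_alpha
   stays in the slab of index m, lasts at least one unit of time and ends in
   (tau m + h, tau (m + alpha)); excursions of different slabs or different indices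
   are disjoint, so at most tau N + 1 of them end before tau N.
   If for every h some alpha(h) gave the good indices upper density below 1/3, take
   heights h_0 = 1, h_(i+1) = h_i + alpha(h_i) Q with Q > 6L/c.  The increments
   tau (m + alpha) - tau m, m <= M, telescope to at most alpha tau N, so few of them
   exceed h_(i+1); hence about half of the m <= M are bad at level i with excursion
   ending in (tau m + h_i, tau m + h_(i+1)].  These excursions are distinct across
   levels, and K > 4L/c + 1 levels yield more than tau N + 1 of them. *)

Section Counting.
Variable R : numDomainType.
Implicit Types (P Q : pred nat) (n : nat).

Definition countr P n : R := \sum_(0 <= m < n) (if P m then 1 else 0).

Lemma countr_ge0 P n : 0 <= countr P n.
Proof. by apply: sumr_ge0 => m _; case: ifP. Qed.

Lemma countrT n : countr predT n = n%:R.
Proof. by rewrite /countr sumr_const_nat subn0. Qed.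

Lemma telescope_shift (f : nat -> R) a X :
  \sum_(0 <= m < X) (f (m + a)%N - f m) = \sum_(0 <= j < a) (f (X + j)%N - f j).
Proof.
elim: X => [|X IH]; first by rewrite big_geq // big1 // => j _; rewrite subrr.
rewrite big_nat_recr //= IH.
have -> : \sum_(0 <= j < a) (f (X.+1 + j)%N - f j) =
  \sum_(0 <= j < a) (f (X + j)%N - f j) + \sum_(0 <= j < a) (f (X + j.+1)%N - f (X + j)%N).
  by rewrite -big_split /=; apply: eq_bigr => j _; rewrite addnS addSn; ring.
by rewrite (telescope_sumr (fun j => f (X + j)%N)) // addn0.
Qed.

Variable f : nat -> R.
Hypotheses (f_ge0 : forall k, 0 <= f k) (f_mono : {homo f : k k' / (k <= k')%N >-> k <= k'}).

Lemma sum_increments_le a X N : (X + a <= N.+1)%N ->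
  \sum_(0 <= m < X) (f (m + a)%N - f m) <= a%:R * f N.
Proof.
move=> XaN; rewrite telescope_shift mulr_natl -[a in _ *+ a]subn0 -sumr_const_nat.
apply: ler_sum_nat => j /andP[_ ja].
by rewrite lerBlDr ler_wpDr // f_mono //; lia.
Qed.

Lemma countr_large_increments a X N (H : R) : (X + a <= N.+1)%N ->
  H * countr (fun m => H < f (m + a)%N - f m) X <= a%:R * f N.
Proof.
move=> XaN; apply: le_trans _ (sum_increments_le XaN).
rewrite /countr mulr_sumr; apply: ler_sum => m _.
case: ifP => [/ltW|_]; first by rewrite mulr1.
by rewrite mulr0 subr_ge0 f_mono // leq_addr.
Qed.

End Counting.

Lemma card_le_of_inj_bounded (T : finType) (A : pred T) (f : T -> nat) B :
  {in A &, injective f} -> (forall x, x \in A -> (f x < B)%N) -> (#|A| <= B)%N.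
Proof.
move=> finj fB.
have := @uniq_leq_size _ (map f (enum A)) (iota 0 B).
rewrite size_map size_iota -cardE; apply.
  by rewrite map_inj_in_uniq ?enum_uniq // => x y; rewrite !mem_enum; exact: finj.
move=> n /mapP [x]; rewrite mem_enum => xA ->.
by rewrite mem_iota add0n fB.
Qed.

Lemma sum_countr_card (R : numDomainType) (P : nat -> nat -> bool) K X :
  \sum_(i < K) countr R (P i) X = #|[pred p : 'I_K * 'I_X | P p.1 p.2]|%:R.
Proof.
under eq_bigr => i _ do rewrite /countr big_mkord.
rewrite pair_big /= -big_mkcond /= -sum1_card natr_sum.
by apply: eq_bigl => p.
Qed.

Section FrequentlyGood.
Variables (R : realType) (tau : nat -> R) (rho : R).
Hypotheses (tau_ge0 : forall k, 0 <= tau k)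
  (tau_mono : {homo tau : k k' / (k <= k')%N >-> k <= k'}).
Hypotheses (rho_gt0 : 0 < rho)
  (tau_slow : forall N0, exists2 N, (N0 <= N)%N & tau N < N.+1%:R * rho).

(* [good m a h] stands for h^(m)_a <= h; when it fails, [exit m a] is the end of the
   last excursion counted by k^(m)_a and [stamp m a] an integer time inside it. *)
Variables (good : nat -> nat -> nat -> bool) (stamp : nat -> nat -> nat)
  (exit : nat -> nat -> R).
Hypothesis exit_gt : forall {m a h}, ~~ good m a h -> tau m + h%:R < exit m a.
Hypothesis exit_lt : forall {m a h}, ~~ good m a h -> exit m a < tau (m + a).
Hypothesis stamp_lt_exit :
  forall {m a h}, ~~ good m a h -> (stamp m a)%:R < exit m a.
Hypothesis stamp_inj : forall {m m' a a' h h'}, ~~ good m a h -> ~~ good m' a' h' ->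
  stamp m a = stamp m' a' -> m = m' /\ exit m a = exit m' a'.

Section RarelyGood.
Variables (alpha M0 : nat -> nat) (Q K : nat).
Hypothesis alpha_ge2 : forall {h}, (1 <= h)%N -> (2 <= alpha h)%N.
Hypothesis rarely_good : forall {h M}, (1 <= h)%N -> (M0 h <= M)%N ->
  countr R (fun m => good m (alpha h) h) M.+1 < M.+1%:R / 3.
Hypotheses (Q_gt : 6 * rho < Q%:R) (K_gt : 4 * rho + 1 < K%:R).

Fixpoint height i := if i is i'.+1 then (height i' + alpha (height i') * Q)%N else 1%N.

Local Notation a i := (alpha (height i)).

Lemma height_mono : {homo height : i j / (i <= j)%N}.
Proof. by apply: homo_leq => [//|???|i]; [exact: leq_trans | exact: leq_addr]. Qed.

Lemma height_ge1 i : (1 <= height i)%N.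
Proof. exact: (height_mono (leq0n i)). Qed.

(* The excursion of a pair bad at level [i] ends in (tau m + height i, tau m + height i.+1],
   so distinct levels never share an excursion. *)
Definition bad_at i m :=
  ~~ good m (a i) (height i) && (tau (m + a i)%N - tau m <= (height i.+1)%:R).

Lemma bad_at_exit i m : bad_at i m ->
  tau m + (height i)%:R < exit m (a i) <= tau m + (height i.+1)%:R.
Proof.
case/andP=> bad inc; rewrite (exit_gt bad) /=.
by rewrite -lerBlDl (le_trans _ inc) // lerB // ltW // (exit_lt bad).
Qed.

Lemma bad_at_inj i i' m : bad_at i m -> bad_at i' m ->
  exit m (a i) = exit m (a i') -> i = i'.
Proof.
move=> /bad_at_exit /andP[lo hi] /bad_at_exit /andP[lo' hi'] e.
wlog ii' : i i' lo hi lo' hi' e / (i < i')%N.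
  move=> wl; case: (ltngtP i i') => [|ii'|//]; first exact: wl.
  by apply/esym/wl.
have : ((height i.+1)%:R <= (height i')%:R :> R) by rewrite ler_nat; apply: height_mono.
by move: hi lo'; rewrite e => *; exfalso; lra.
Qed.

Lemma count_bad_at_ge i M A : (M0 (height i) <= M)%N -> (a i <= A)%N ->
  tau (M + A) < (M + A).+1%:R * rho ->
  M.+1%:R / 2 - A%:R / 6 <= countr R (bad_at i) M.+1.
Proof.
move=> MM aA tauN; have tauN' : tau (M + A) < (M.+1%:R + A%:R) * rho.
  by rewrite -natrD addSn.
set H := (height i.+1)%:R : R.
set big := countr R (fun m => H < tau (m + a i)%N - tau m) M.+1.
have a_gt0 : (0 < a i)%N by rewrite (leq_trans _ (alpha_ge2 (height_ge1 i))).
have Hbig : H * big <= (a i)%:R * tau (M + A) by apply: countr_large_increments => //; lia.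
have aQH : (a i)%:R * Q%:R <= H by rewrite -natrM ler_nat leq_addl.
have Qbig : Q%:R * big <= tau (M + A).
  rewrite -(ler_pM2l (_ : 0 < (a i)%:R)) ?ltr0n // mulrA.
  exact: le_trans (ler_wpM2r (countr_ge0 _ _ _) aQH) Hbig.
have big_lt : big * 6 < M.+1%:R + A%:R.
  have := ler_wpM2r (countr_ge0 _ _ _ : 0 <= big) (ltW Q_gt).
  rewrite -(ltr_pM2r rho_gt0); lra.
have good_lt := rarely_good (height_ge1 i) MM.
have cover : M.+1%:R <= countr R (fun m => good m (a i) (height i)) M.+1 + big
                        + countr R (bad_at i) M.+1.
  rewrite -countrT /countr -!big_split /=; apply: ler_sum => m _.
  by rewrite /bad_at; case: good; case: ltP => /=; lra.
lra.
Qed.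

Lemma sum_count_bad_at_le X N : (forall i m, (i < K)%N -> (m < X)%N -> (m + a i <= N)%N) ->
  \sum_(i < K) countr R (bad_at i) X <= tau N + 1.
Proof.
move=> inN; rewrite sum_countr_card.
pose f (p : 'I_K * 'I_X) := stamp p.2 (a p.1).
have stamp_le : forall p : 'I_K * 'I_X, bad_at p.1 p.2 -> (f p < (Num.trunc (tau N)).+1)%N.
  move=> [i m] /= /andP[bad _]; rewrite ltnS truncn_ge_nat //.
  apply/ltW/(lt_le_trans (stamp_lt_exit bad))/ltW/(lt_le_trans (exit_lt bad)).
  exact/tau_mono/inN.
have f_inj : {in [pred p : 'I_K * 'I_X | bad_at p.1 p.2] &, injective f}.
  move=> [i m] [i' m']; rewrite !inE /= => cim ci'm' /=.
  have /andP[bad _] := cim; have /andP[bad' _] := ci'm'.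
  move=> /(stamp_inj bad bad') [/val_inj em]; subst m' => e.
  by rewrite (val_inj (bad_at_inj cim ci'm' e)).
apply: le_trans (_ : ((Num.trunc (tau N)).+1)%:R <= _).
  by rewrite ler_nat (card_le_of_inj_bounded f_inj) // => p; rewrite inE => /stamp_le.
by rewrite -addn1 natrD lerD2r truncn_le.
Qed.

Lemma rarely_good_false : False.
Proof.
pose A := \max_(i < K) a i.
pose N0 := (4 * A + \max_(i < K) M0 (height i) + 2)%N.
have [N N0N tauN] := tau_slow N0.
pose M := (N - A)%N.
have MA : N = (M + A)%N by rewrite subnK //; lia.
have levels : forall i : 'I_K, M.+1%:R / 2 - A%:R / 6 <= countr R (bad_at i) M.+1.
  move=> i; apply: count_bad_at_ge; rewrite -?MA //; last exact: leq_bigmax.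
  have : (M0 (height i) <= \max_(j < K) M0 (height j))%N := leq_bigmax i.
  by move: N0N; rewrite /M /N0; lia.
have pairs : \sum_(i < K) countr R (bad_at i) M.+1 <= tau N + 1.
  apply: sum_count_bad_at_le => i m iK mX; rewrite MA; apply: leq_add; first lia.
  exact: (leq_bigmax (Ordinal iK)).
have := le_trans (ler_sum _ (fun i _ => levels i)) pairs.
rewrite sumr_const card_ord -[_ *+ K]mulr_natl => sumK.
have XA : 3 * A%:R + 2 <= M.+1%:R :> R by rewrite -natrM -natrD ler_nat; lia.
have A_ge0 := ler0n R A.
have W_gt0 : 0 < M.+1%:R / 2 - A%:R / 6 :> R by lra.
have KW : (4 * rho + 1) * (M.+1%:R / 2 - A%:R / 6) < K%:R * (M.+1%:R / 2 - A%:R / 6).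
  by rewrite ltr_pM2r.
have rhoXA : 0 <= rho * (M.+1%:R - 3 * A%:R) by apply: mulr_ge0 (ltW rho_gt0) _; lra.
have rhoA : 0 <= rho * A%:R by apply: mulr_ge0 (ltW rho_gt0) _.
rewrite {2}MA -addSn natrD in tauN.
suff : tau N + 1 < tau N + 1 by rewrite ltxx.
lra.
Qed.

End RarelyGood.

Theorem exists_frequently_good : exists h, (1 <= h)%N /\
  forall alpha, (2 <= alpha)%N -> forall M0, exists2 M, (M0 <= M)%N &
    M.+1%:R / 3 <= countr R (fun m => good m alpha h) M.+1.
Proof.
apply: contrapT => none.
have witness h : exists p : nat * nat, (1 <= h)%N -> (2 <= p.1)%N /\
    forall M, (p.2 <= M)%N -> countr R (fun m => good m p.1 h) M.+1 < M.+1%:R / 3.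
  case: (leqP 1 h) => h1; last by exists (0, 0)%N.
  have /existsNP[a /not_implyP[a2 /existsNP[M0 rare]]] :
      ~ forall a, (2 <= a)%N -> forall M0, exists2 M, (M0 <= M)%N &
        M.+1%:R / 3 <= countr R (fun m => good m a h) M.+1.
    by move=> all; apply: none; exists h.
  exists (a, M0) => _; split => // M M0M; rewrite ltNge; apply/negP => ge.
  by apply: rare; exists M.
have [F HF] := choice witness.
apply: (@rarely_good_false (fun h => (F h).1) (fun h => (F h).2)
          (Num.trunc (6 * rho)).+1 (Num.trunc (4 * rho + 1)).+1).
- by move=> h /HF[].
- by move=> h M /HF[_]; apply.
- by apply: truncnS_gt.
- by apply: truncnS_gt.
Qed.

End FrequentlyGood.

Section HittingTimes.
Variables (R : realType) (d : nat).
Implicit Types (A : set 'rV[R]_d) (w : R -> 'rV[R]_d) (l : 'rV[R]_d) (u t : R).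

Lemma hitT_ge0 A w : (0 <= hitT A w)%E.
Proof. by apply: le_ereal_inf_tmp => _ [t [t0 _] <-]; rewrite lee_fin. Qed.

Lemma Tu_ge0 l u w : (0 <= Tu l u w)%E.
Proof. by apply: le_ereal_inf_tmp => _ [t [t0 _] <-]; rewrite lee_fin. Qed.

Lemma Tu_le l u w t : 0 <= t -> u <= dotv l (w t) -> (Tu l u w <= t%:E)%E.
Proof. by move=> t0 ut; apply: ereal_inf_lbound; exists t. Qed.

Lemma le_Tu l w : {homo Tu l ^~ w : u v / u <= v >-> (u <= v)%E}.
Proof.
move=> u v uv; apply: ereal_inf_le_tmp => _ [t [t0 vt] <-].
by exists t => //; split => //; apply: le_trans vt.
Qed.

Lemma after_ge T (F : (R -> 'rV[R]_d) -> \bar R) w :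
  (forall w', (0 <= F w')%E) -> (T <= after T F w)%E.
Proof. by move=> F0; case: T => [r| |] //=; rewrite ?leNye // leeDr. Qed.

Lemma not_hit_before A w r t : r <= t ->
  (t%:E < after r%:E (hitT A) w)%E -> ~ A (w t).
Proof.
move=> rt /= tlt wtA.
have : (hitT A (Defs.shift w r) <= (t - r)%:E)%E.
  apply: ereal_inf_lbound; exists (t - r) => //; split; first by rewrite subr_ge0.
  by rewrite /Defs.shift addrC subrK.
move: tlt (hitT_ge0 A (Defs.shift w r)); case: (hitT A _) => [q| |] //=.
by rewrite -EFinD !lte_fin !lee_fin; lra.
Qed.

End HittingTimes.

Section Excursions.
Variables (R : realType) (d : nat) (l : 'rV[R]_d) (L L' : R) (m : nat).
Variable w : R -> 'rV[R]_d.
Local Notation slab := (oslab l (m%:R * L) (m.+1%:R * L)).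
Local Notation RS n := (RS l L L' m n w).

Lemma RS_exit n : (RS n).2 = after (RS n).1 (exitT slab) w.
Proof.
case: n => [|n] //=; case: (RS n).2 => [r| |] //=.
rewrite /S1; case: (R1 l L L' m (Defs.shift w r)) => [q| |] //=.
have -> : Defs.shift (Defs.shift w r) q = Defs.shift w (q + r).
  by apply: funext => s; rewrite /Defs.shift addrA [q + r]addrC.
by rewrite EFinD addeA.
Qed.

Lemma RS_start_le_exit n : ((RS n).1 <= (RS n).2)%E.
Proof. by rewrite RS_exit; apply: after_ge => w'; apply: hitT_ge0. Qed.

Lemma RS_exit_le_next n : ((RS n).2 <= (RS n.+1).1)%E.
Proof. by apply: after_ge => w'; apply: hitT_ge0. Qed.

Lemma RS_start_ge0 n : (0 <= (RS n).1)%E.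
Proof.
elim: n => [|n IH]; first exact: hitT_ge0.
exact: le_trans IH (le_trans (RS_start_le_exit n) (RS_exit_le_next n)).
Qed.

Lemma RS_exit_le_start j n : (j < n)%N -> ((RS j).2 <= (RS n).1)%E.
Proof.
elim: n => [//|n IH]; rewrite ltnS leq_eqVlt => /orP[/eqP ->|jn].
  exact: RS_exit_le_next.
exact: le_trans (IH jn) (le_trans (RS_start_le_exit n) (RS_exit_le_next n)).
Qed.

Lemma RS_in_slab n t : ((RS n).1 <= t%:E)%E -> (t%:E < (RS n).2)%E -> slab (w t).
Proof.
rewrite RS_exit; move: (RS_start_ge0 n); case: (RS n).1 => [r| |] //= _.
by rewrite lee_fin => rt /(not_hit_before rt) /contrapT.
Qed.

End Excursions.

Section ExcursionStamps.
Variables (R : realType) (d : nat) (l : 'rV[R]_d) (L L' : R) (w : R -> 'rV[R]_d).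

Lemma kalpha_of_halpha_gt m a (h : R) : 0 <= h ->
  (Tu l ((m + a)%:R * L) w < +oo)%E -> Tu l (m%:R * L) w \is a fin_num ->
  (h%:E < halpha l L L' m a w)%E ->
  kset l L L' m a w (kalpha l L L' m a w) /\
  (h%:E < Sk l L L' m (kalpha l L L' m a w) w - Tu l (m%:R * L) w)%E.
Proof.
move=> h0 Tfin Tm; rewrite /halpha Tfin => hlt.
have : kspec l L L' m a w (kalpha l L L' m a w) \/ kalpha l L L' m a w = 0%N.
  by rewrite /kalpha; case: xgetP => [k _ Hk|_]; [left|right].
move: hlt; move: (kalpha _ _ _ _ _ _) => k hlt.
have k_neq0 : k <> 0%N by move=> k0; move: hlt; rewrite k0 /= subee // lte_fin ltNge h0.
case=> [|//]; rewrite /kspec Tfin /=; case: asboolP => [_ [ksk _] //|_ /= //].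
Qed.

Variable tau : nat -> R.
Hypotheses (L_gt0 : 0 < L) (tauE : forall k, Tu l (k%:R * L) w = (tau k)%:E).

Definition excursion_start m a := fine (Rk l L L' m (kalpha l L L' m a w) w).
Definition excursion_end m a := fine (Sk l L L' m (kalpha l L L' m a w) w).

(* The integer time [ceil (excursion_start m a)] lies inside the excursion, since an
   excursion counted by [kset] lasts at least one time unit. *)
Definition excursion_stamp m a := `|Num.ceil (excursion_start m a)|%N.

Local Notation good m a h := (halpha l L L' m a w <= h%:R%:E)%E.
Local Notation k m a := (kalpha l L L' m a w).

Lemma excursion_of_not_good m a h : ~~ good m a h ->
  [/\ (0 < k m a)%N,
      RS l L L' m (k m a).-1 w = ((excursion_start m a)%:E, (excursion_end m a)%:E),
      0 <= excursion_start m a,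
      excursion_start m a + 1 <= excursion_end m a &
      tau m + h%:R < excursion_end m a < tau (m + a)].
Proof.
rewrite -ltNge => hlt.
have [[k_gt0 [Rk1 Sk_lt]] Sk_gt] := kalpha_of_halpha_gt (ler0n R h)
  (ltac:(by rewrite tauE ltry)) (ltac:(by rewrite tauE)) hlt.
rewrite /excursion_start /excursion_end; move: k_gt0 Rk1 Sk_lt Sk_gt.
case: (k m a) => [//|k] _; rewrite /Rk /Sk /= !tauE.
move: (RS_start_ge0 l L L' m w k); case: (RS l L L' m k w) => -[r| |] [s| |] //=.
rewrite -!EFinD !lee_fin !lte_fin => r0 rs slt sgt.
by split => //; apply/andP; split; lra.
Qed.

Lemma excursion_end_gt m a h : ~~ good m a h -> tau m + h%:R < excursion_end m a.
Proof. by case/excursion_of_not_good => _ _ _ _ /andP[]. Qed.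

Lemma excursion_end_lt m a h : ~~ good m a h -> excursion_end m a < tau (m + a).
Proof. by case/excursion_of_not_good => _ _ _ _ /andP[]. Qed.

Lemma excursion_stamp_during m a h : ~~ good m a h ->
  excursion_start m a <= (excursion_stamp m a)%:R < excursion_end m a.
Proof.
case/excursion_of_not_good => _ _ r0 rs _.
have [lo hi] := andP (ceil_itv (excursion_start m a)).
have z0 : (0 <= Num.ceil (excursion_start m a))%R by rewrite ceil_ge0; lra.
rewrite /excursion_stamp natr_absz ger0_norm // hi /=.
by move: lo; rewrite intrD; lra.
Qed.

Lemma excursion_stamp_lt_end m a h : ~~ good m a h ->
  (excursion_stamp m a)%:R < excursion_end m a.
Proof. by case/excursion_stamp_during/andP. Qed.

Lemma excursion_stamp_in_slab m a h : ~~ good m a h ->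
  oslab l (m%:R * L) (m.+1%:R * L) (w (excursion_stamp m a)%:R).
Proof.
move=> bad; have [_ RSE _ _ _] := excursion_of_not_good bad.
have /andP[lo hi] := excursion_stamp_during bad.
by apply: (RS_in_slab (L' := L') (n := (k m a).-1)); rewrite RSE ?lee_fin ?lte_fin.
Qed.

Lemma oslab_disjoint m m' x : oslab l (m%:R * L) (m.+1%:R * L) x ->
  oslab l (m'%:R * L) (m'.+1%:R * L) x -> m = m'.
Proof.
rewrite /oslab /= => /andP[a b] /andP[c e].
have le_of_lt i j : i%:R * L < j.+1%:R * L -> (i <= j)%N.
  by rewrite ltr_pM2r // ltr_nat ltnS.
by apply/eqP; rewrite eqn_leq !le_of_lt ?(lt_trans a e) ?(lt_trans c b).
Qed.

Lemma excursion_end_le_start m a a' h h' : ~~ good m a h -> ~~ good m a' h' ->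
  (k m a < k m a')%N -> excursion_end m a <= excursion_start m a'.
Proof.
move=> bad bad' klt.
have [k_gt0 RSE _ _ _] := excursion_of_not_good bad.
have [_ RSE' _ _ _] := excursion_of_not_good bad'.
have := @RS_exit_le_start _ _ l L L' m w (k m a).-1 (k m a').-1.
by rewrite RSE RSE' lee_fin; apply; lia.
Qed.

Lemma excursion_stamp_inj m m' a a' h h' : ~~ good m a h -> ~~ good m' a' h' ->
  excursion_stamp m a = excursion_stamp m' a' ->
  m = m' /\ excursion_end m a = excursion_end m' a'.
Proof.
move=> bad bad' e.
have mm' : m = m'.
  apply: oslab_disjoint (excursion_stamp_in_slab bad) _.
  by rewrite e; exact: excursion_stamp_in_slab bad'.
subst m'; split => //.
have /andP[lo hi] := excursion_stamp_during bad.
have /andP[lo' hi'] := excursion_stamp_during bad'.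
rewrite e in lo hi.
case: (ltngtP (k m a) (k m a')) => [klt|klt|ek]; last by rewrite /excursion_end ek.
- by have := excursion_end_le_start bad bad' klt; lra.
- by have := excursion_end_le_start bad' bad klt; lra.
Qed.

End ExcursionStamps.

Section Limsup.
Variable R : realType.

Lemma limf_esup_gt0_frequently (V : R -> R) :
  (0 < limf_esup (fun t => (V t / t)%:E) (pinfty_nbhs R))%E ->
  exists2 c, 0 < c & forall T, exists2 t, T < t & c * t <= V t.
Proof.
set lsup := limf_esup _ _ => lsup_gt0.
have [c c_gt0 c_lt] : exists2 c, 0 < c & (c%:E < lsup)%E.
  move: lsup_gt0; case: lsup => [r| |] //= r_gt0; last by exists 1; rewrite ?ltry.
  by rewrite lte_fin in r_gt0; exists (r / 2); rewrite ?lte_fin; lra.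
exists c => // T; pose T' := Num.max T 0.
have : (lsup <= ereal_sup ((fun t => (V t / t)%:E) @` [set t : R | (T' < t)%R]))%E.
  apply: ereal_inf_lbound; exists [set t : R | (T' < t)%R] => //.
  by exists T'; split => //; apply: num_real.
move=> /(lt_le_trans c_lt) /ereal_sup_gt [_ [t /= Tt <-]]; rewrite lte_fin => ct.
have t_gt0 : 0 < t by apply: le_lt_trans Tt; rewrite le_max lexx orbT.
exists t; first by apply: le_lt_trans Tt; rewrite le_max lexx.
by rewrite -ler_pdivlMr // ltW.
Qed.

Lemma limn_esup_ge_frequently (u : nat -> R) (a : R) :
  (forall N, exists2 n, (N <= n)%N & a <= u n) ->
  (a%:E <= limn_esup (fun n => (u n)%:E))%E.
Proof.
move=> freq; apply: le_ereal_inf_tmp => _ [V [N _ NV] <-].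
have [n Nn an] := freq N.
apply: le_trans (_ : ((u n)%:E <= _)%E); first by rewrite lee_fin.
by apply: ereal_sup_ubound; exists n => //; apply: NV.
Qed.

End Limsup.

Section PositiveDrift.
Variables (R : realType) (d : nat) (l : 'rV[R]_d) (w : R -> 'rV[R]_d) (L c : R).
Hypotheses (L_gt0 : 0 < L) (c_gt0 : 0 < c).
Hypothesis drift : forall T, exists2 t, T < t & c * t <= dotv l (w t).

Lemma Tu_fin_num u : Tu l u w \is a fin_num.
Proof.
have [t ut ct] := drift (Num.max (u / c) 0).
rewrite ge0_fin_numE; last exact: Tu_ge0.
apply: le_lt_trans (_ : (_ <= t%:E)%E) (ltry t); apply: Tu_le.
  by apply/ltW/(le_lt_trans _ ut); rewrite le_max lexx orbT.
apply: le_trans ct; rewrite -ler_pdivrMl // ltW //; apply: le_lt_trans _ ut.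
by rewrite le_max mulrC lexx.
Qed.

Lemma Tu_frequently_slow N0 : exists2 N, (N0 <= N)%N &
  exists2 t, (Tu l (N%:R * L) w <= t%:E)%E & c * t < N.+1%:R * L.
Proof.
have [t Tt ct] := drift (N0%:R * L / c).
have t_ge0 : 0 <= t by apply/ltW/(le_lt_trans _ Tt); rewrite !mulr_ge0 ?invr_ge0 ?ler0n ?ltW.
pose N := Num.trunc (c * t / L).
have ctL_ge0 : 0 <= c * t / L by rewrite divr_ge0 ?mulr_ge0 // ltW.
exists N.
  rewrite truncn_ge_nat // ler_pdivlMr //.
  by move: Tt; rewrite ltr_pdivrMr // => Tt; lra.
exists t; last by rewrite -ltr_pdivrMr //; apply: truncnS_gt.
apply: Tu_le => //; apply: le_trans ct.
by rewrite -ler_pdivlMr // truncn_le.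
Qed.

End PositiveDrift.

Theorem proposition2p1 (R : realType) (d : nat) (Rc : R) (l : 'rV[R]_d)
    (L' L : R) (w : R -> 'rV[R]_d) :
  0 < Rc ->
  dotv l l = 1 ->
  Rc < L' -> L = 3 * L' ->
  {within [set t : R | 0 <= t], continuous w} ->
  w 0 = 0 ->
  (0 < limf_esup (fun t : R => ((dotv l (w t)) / t)%:E) (pinfty_nbhs R))%E ->
  exists h : nat, (1 <= h)%N /\
    forall alpha : nat, (2 <= alpha)%N ->
      ((1 / 3 : R)%:E <=
       limn_esup (fun M : nat =>
         ((M.+1%:R)^-1 *
          (\sum_(0 <= m < M.+1)
             (if (halpha l L L' m alpha w <= h%:R%:E)%E then 1 else 0)))%:E))%E.
Proof.
move=> Rc_gt0 _ Rc_lt_L' L_eq _ _ drift_gt0.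
have L_gt0 : 0 < L by rewrite L_eq; lra.
have [c c_gt0 drift] := limf_esup_gt0_frequently drift_gt0.
pose tau k := fine (Tu l (k%:R * L) w).
have tauE k : Tu l (k%:R * L) w = (tau k)%:E by rewrite fineK // (Tu_fin_num c_gt0 drift).
have tau_ge0 k : 0 <= tau k by rewrite -lee_fin -tauE Tu_ge0.
have tau_mono : {homo tau : k k' / (k <= k')%N >-> k <= k'}.
  by move=> k k' kk'; rewrite -lee_fin -!tauE le_Tu // ler_pM2r // ler_nat.
have tau_slow N0 : exists2 N, (N0 <= N)%N & tau N < N.+1%:R * (L / c).
  have [N N0N [t Tt ct]] := Tu_frequently_slow L_gt0 c_gt0 drift N0.
  exists N => //; rewrite mulrA ltr_pdivlMr // mulrC.
  by apply: le_lt_trans ct; rewrite ler_pM2l // -lee_fin -tauE.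
have [h [h_ge1 freq]] := exists_frequently_good
  (good := fun m a h => (halpha l L L' m a w <= h%:R%:E)%E)
  tau_ge0 tau_mono (divr_gt0 L_gt0 c_gt0) tau_slow
  (excursion_end_gt tauE) (excursion_end_lt tauE)
  (excursion_stamp_lt_end tauE) (excursion_stamp_inj L_gt0 tauE).
exists h; split => // alpha alpha_ge2; apply: limn_esup_ge_frequently => M0.
have [M M0M cnt] := freq alpha alpha_ge2 M0; exists M => //.
by rewrite [_^-1 * _]mulrC ler_pdivlMr ?ltr0n //; rewrite /countr in cnt; lra.
Qed.
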